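(* Let $\gamma>1$ and let $\Psi$ be a Borel probability measure on $\Delta_n$ such that $\Psi(\{\mathbf s\in\Delta_n:\mathbf a^\top\mathbf s=0\})=0$ for every nonzero $\mathbf a\in\mathbb R^n$. Define $\eta_{\mathbf x}=\int_{\Delta_n}(\mathbf x^\top\mathbf s)^\gamma\,\Psi(\mathrm d\mathbf s)$ for $\mathbf x\in[0,\infty)^n$, and assume $\eta_{\mathbf e_i}>0$ for $i=1,\dots,n$. Then the function $f(\mathbf w)=\eta_{\mathbf w}/\left(\sum_{i=1}^nw_i\eta_{\mathbf e_i}^{1/\gamma}\right)^\gamma$ has a unique minimizer on $\Delta_n$.
   Context: $\Delta_n=\{\mathbf x\in[0,1]^n:x_1+\dots+x_n=1\}$ and $\mathbf e_1,\dots,\mathbf e_n$ are the standard basis vectors of $\mathbb R^n$. *)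

From HB Require Import structures.
From mathcomp Require Import all_boot all_order all_algebra.
From mathcomp Require Import all_classical all_reals all_analysis.
Set Implicit Arguments. Unset Strict Implicit. Unset Printing Implicit Defensive.
Import Order.TTheory GRing.Theory Num.Theory.
Local Open Scope classical_set_scope.
Local Open Scope ring_scope.

(* Points of R^n are represented as n-tuples; the measurable structure on
   n.-tuple R is the product sigma-algebra (= Borel sigma-algebra of R^n). *)

Definition dotp (R : realType) (n : nat) (x s : n.-tuple R) : R :=
  \sum_(i < n) tnth x i * tnth s i.

Definition basis_vec (R : realType) (n : nat) (i : 'I_n) : n.-tuple R :=
  [tuple (if j == i then 1 else 0 : R) | j < n].

Definition simplex (R : realType) (n : nat) : set (n.-tuple R) :=
  [set x | (forall i, 0 <= tnth x i <= 1) /\ \sum_(i < n) tnth x i = 1].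

Arguments simplex R n : clear implicits.
Arguments basis_vec R {n} i.

Definition eta_int (R : realType) (n : nat) (Psi : probability (n.-tuple R) R)
  (gamma : R) (x : n.-tuple R) : \bar R :=
  (\int[Psi]_(s in simplex R n) ((dotp x s) `^ gamma)%:E)%E.

Definition fobj (R : realType) (n : nat) (Psi : probability (n.-tuple R) R)
  (gamma : R) (w : n.-tuple R) : R :=
  fine (eta_int Psi gamma w) /
  (\sum_(i < n) tnth w i * (fine (eta_int Psi gamma (basis_vec R i))) `^ gamma^-1)
    `^ gamma.

(* Proof.  f is invariant under positive scaling, so minimizing f on Delta_n
   amounts to minimizing eta on the slice K = {x >= 0 | x^T c = 1}: the
   normalizations w |-> w / (w^T c) and x |-> x / (sum_i x_i) are mutually
   inverse between Delta_n and K and carry the values of f to those of eta.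
   - Existence: K is compact and eta is Lipschitz, hence continuous, on K.
   - Uniqueness: K is convex and eta is strictly midpoint convex on the
     orthant.  Indeed t |-> t^gamma is strictly convex, so the convexity gap
     of the integrand at the midpoint of x <> y is nonnegative, and positive
     off the hyperplane (x - y)^T s = 0, which is Psi-null. *)

From HB Require Import structures.
From mathcomp Require Import all_boot all_order all_algebra.
From mathcomp Require Import all_classical all_reals all_analysis.
From mathcomp Require Import measurable_realfun.
From mathcomp Require Import lra.
Import numFieldNormedType.Exports.
Import Order.TTheory GRing.Theory Num.Theory.
Set Implicit Arguments. Unset Strict Implicit. Unset Printing Implicit Defensive.
Local Open Scope classical_set_scope.
Local Open Scope ring_scope.

Section PowerFunction.
Variables (R : realType) (gamma : R).

Lemma powR_MVT (a b : R) : 0 < b -> b < a -> exists2 c, b < c < a &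
  a `^ gamma - b `^ gamma = gamma * c `^ (gamma - 1) * (a - b).
Proof.
move=> b0 ba.
have der (x : R) : 0 < x ->
    is_derive x 1 (fun y : R => y `^ gamma) (gamma * x `^ (gamma - 1)).
  move=> x0; have x_pos : x \in `]0, +oo[ by rewrite in_itv /= x0.
  rewrite -(powR_derive1 gamma x_pos) derive1E; apply: derivableP.
  exact: derivable_powR.
have der_in (x : R) : x \in `]b, a[ ->
    is_derive x 1 (fun y : R => y `^ gamma) (gamma * x `^ (gamma - 1)).
  by rewrite in_itv /= => /andP[bx _]; apply: der; exact: lt_trans bx.
have cont : {within `[b, a], continuous (fun y : R => y `^ gamma)}.
  apply: derivable_within_continuous => x; rewrite in_itv /= => /andP[bx _].
  by apply: derivable_powR; rewrite in_itv /= andbT; exact: lt_le_trans bx.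
have [c] := MVT ba der_in cont.
by rewrite in_itv /= => bca E; exists c.
Qed.

(* For gamma > 1, t |-> t ^ gamma is strictly midpoint convex on [0, +oo):
   the mean slopes on the two halves of [b, a] are strictly increasing. *)
Lemma powR_midpoint_lt (a b : R) : 1 < gamma -> 0 <= a -> 0 <= b -> a != b ->
  ((a + b) / 2) `^ gamma < (a `^ gamma + b `^ gamma) / 2.
Proof.
move=> g1; wlog ba : a b / b < a.
  move=> wlog_ba a0 b0 ab; have [ba|ab'] := ltP b a; first exact: wlog_ba.
  rewrite addrC [X in _ < X / 2]addrC; apply: wlog_ba => //.
    by rewrite lt_neqAle ab ab'.
  by rewrite eq_sym.
move=> a0 b0 _; have g0 : 0 < gamma by apply: lt_trans g1.
have [-> | b_neq0] := eqVneq b 0.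
  have half_pow : (2^-1 : R) `^ gamma < 2^-1.
    rewrite -[X in _ `^ X](subrK 1 gamma) powRD; last first.
      by rewrite invr_eq0 pnatr_eq0 implybT.
    rewrite powRr1 ?invr_ge0 ?ler0n // gtr_pMl ?invr_gt0 ?ltr0n //.
    have half_lt1 : (2^-1 : R) < 1 by rewrite invf_lt1 ?ltr1n.
    have := @gt0_ltr_powR _ (gamma - 1) _ 2^-1 1; rewrite powR1; apply => //.
    - by rewrite subr_gt0.
    - by rewrite nnegrE invr_ge0.
    - by rewrite nnegrE.
  rewrite addr0 powR0 ?gt_eqF // addr0 powRM ?invr_ge0 ?ler0n //.
  by rewrite ltr_pM2l ?half_pow //; apply/powR_gt0/(le_lt_trans b0 ba).
have b_pos : 0 < b by rewrite lt_neqAle eq_sym b_neq0.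
set m := (a + b) / 2.
have bm : b < m by rewrite /m; lra.
have ma : m < a by rewrite /m; lra.
have [c1 /andP[bc1 c1m] E1] := powR_MVT b_pos bm.
have [c2 /andP[mc2 c2a] E2] := powR_MVT (lt_trans b_pos bm) ma.
have slopes : c1 `^ (gamma - 1) < c2 `^ (gamma - 1).
  rewrite gt0_ltr_powR ?subr_gt0 ?nnegrE //; last exact: lt_trans c1m mc2.
    by apply: ltW; apply: lt_trans bc1.
  by apply: ltW; apply: lt_trans mc2; apply: lt_trans bm.
have am : a - m = m - b by rewrite /m; lra.
suff : m `^ gamma - b `^ gamma < a `^ gamma - m `^ gamma by lra.
rewrite E1 E2 am -!mulrA [gamma * (_ * _)]mulrCA [gamma * (c2 `^ _ * _)]mulrCA.
by rewrite ltr_pM2r // mulr_gt0 // subr_gt0.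
Qed.

Lemma powR_midpoint_le (a b : R) : 1 < gamma -> 0 <= a -> 0 <= b ->
  ((a + b) / 2) `^ gamma <= (a `^ gamma + b `^ gamma) / 2.
Proof.
move=> g1 a0 b0; have [->|ab] := eqVneq a b; last exact/ltW/powR_midpoint_lt.
have -> : (b + b) / 2 = b by lra.
lra.
Qed.

Lemma powR_sub_le (a b M : R) : 1 <= gamma -> 0 <= b -> b <= a -> a <= M ->
  a `^ gamma - b `^ gamma <= gamma * M `^ (gamma - 1) * (a - b).
Proof.
move=> g1 b0 ba aM; have g0 : 0 < gamma by apply: lt_le_trans g1.
have a0 : 0 <= a by apply: le_trans ba.
have slope_le c : 0 <= c -> c <= M -> c `^ (gamma - 1) <= M `^ (gamma - 1).
  move=> c0 cM; rewrite ge0_ler_powR ?subr_ge0 ?nnegrE //; exact: le_trans cM.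
have [->|b_neq0] := eqVneq b 0.
  rewrite powR0 ?gt_eqF // !subr0.
  have [->|a_neq0] := eqVneq a 0; first by rewrite powR0 ?gt_eqF // mulr0.
  rewrite -[X in a `^ X](subrK 1 gamma) (@powRD _ a) ?a_neq0 ?implybT // powRr1 //.
  rewrite ler_wpM2r // -[leLHS]mul1r ler_pM ?powR_ge0 //; exact: slope_le.
have [->|b_neq_a] := eqVneq b a; first by rewrite !subrr mulr0.
have b_pos : 0 < b by rewrite lt_neqAle eq_sym b_neq0.
have lt_ba : b < a by rewrite lt_neqAle b_neq_a.
have [c /andP[bc ca] ->] := powR_MVT b_pos lt_ba.
rewrite ler_wpM2r ?subr_ge0 // ler_wpM2l ?(ltW g0) // slope_le //.
  by apply: ltW; apply: lt_trans bc.
by apply: ltW; apply: lt_le_trans aM.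
Qed.

End PowerFunction.

Section Tuples.
Variables (R : realType) (n : nat).
Implicit Types (x y s : n.-tuple R) (t : R).

Definition nonneg x := forall i, 0 <= tnth x i.
Definition tscale t x : n.-tuple R := [tuple t * tnth x i | i < n].
Definition tmid x y : n.-tuple R := [tuple (tnth x i + tnth y i) / 2 | i < n].
Definition tsub x y : n.-tuple R := [tuple tnth x i - tnth y i | i < n].
Definition tsum x : R := \sum_(i < n) tnth x i.
Definition l1_dist x y : R := \sum_(i < n) `|tnth x i - tnth y i|.

Lemma simplex_nonneg s : simplex R n s -> nonneg s.
Proof. by move=> [s01 _] i; case/andP: (s01 i). Qed.

Lemma nonneg_tscale t x : 0 <= t -> nonneg x -> nonneg (tscale t x).
Proof. by move=> t0 x0 i; rewrite tnth_mktuple mulr_ge0. Qed.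

Lemma nonneg_tmid x y : nonneg x -> nonneg y -> nonneg (tmid x y).
Proof. by move=> x0 y0 i; rewrite tnth_mktuple divr_ge0 ?addr_ge0. Qed.

Lemma tscaleK t x : t != 0 -> tscale t (tscale t^-1 x) = x.
Proof.
by move=> t0; apply: eq_from_tnth => i; rewrite !tnth_mktuple mulrA divff ?mul1r.
Qed.

Lemma tsum_tscale t x : tsum (tscale t x) = t * tsum x.
Proof. by rewrite /tsum mulr_sumr; apply: eq_bigr => i _; rewrite tnth_mktuple. Qed.

Lemma tsum_ge0 x : nonneg x -> 0 <= tsum x.
Proof. by move=> x0; apply: sumr_ge0. Qed.

Lemma coord_le_tsum x i : nonneg x -> tnth x i <= tsum x.
Proof. by move=> x0; rewrite /tsum (bigD1 i) //= lerDl sumr_ge0. Qed.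

Lemma dotp_tscale t x s : dotp (tscale t x) s = t * dotp x s.
Proof.
by rewrite /dotp mulr_sumr; apply: eq_bigr => i _; rewrite tnth_mktuple mulrA.
Qed.

Lemma dotp_tmid x y s : dotp (tmid x y) s = (dotp x s + dotp y s) / 2.
Proof.
rewrite /dotp -big_split /= mulr_suml; apply: eq_bigr => i _.
by rewrite tnth_mktuple mulrAC mulrDl.
Qed.

Lemma dotp_tsub x y s : dotp (tsub x y) s = dotp x s - dotp y s.
Proof.
by rewrite /dotp -sumrB; apply: eq_bigr => i _; rewrite tnth_mktuple mulrBl.
Qed.

Lemma dotp_ge0 x s : nonneg x -> nonneg s -> 0 <= dotp x s.
Proof. by move=> x0 s0; apply: sumr_ge0 => i _; rewrite mulr_ge0. Qed.

Lemma dotp_le_tsum x s : nonneg x -> simplex R n s -> dotp x s <= tsum x.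
Proof.
move=> x0 [s01 _]; apply: ler_sum => i _; have /andP[s0 s1] := s01 i.
by rewrite -[leRHS]mulr1 ler_wpM2l.
Qed.

Lemma dotp_dist_le x y s : simplex R n s ->
  `|dotp x s - dotp y s| <= l1_dist x y.
Proof.
move=> [s01 _]; rewrite -dotp_tsub /dotp.
apply: le_trans (ler_norm_sum _ _ _) _; apply: ler_sum => i _.
rewrite tnth_mktuple normrM; have /andP[s0 s1] := s01 i.
by rewrite [X in _ * X]ger0_norm // -[leRHS]mulr1 ler_wpM2l.
Qed.

Lemma l1_distC x y : l1_dist x y = l1_dist y x.
Proof. by apply: eq_bigr => i _; rewrite distrC. Qed.

Lemma l1_dist_ge0 x y : 0 <= l1_dist x y.
Proof. exact: sumr_ge0. Qed.

Lemma nonneg_basis_vec (i : 'I_n) : nonneg (basis_vec R i).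
Proof. by move=> j; rewrite tnth_mktuple; case: ifP. Qed.

Lemma dotp_basis_vec (i : 'I_n) (c : n.-tuple R) :
  dotp (basis_vec R i) c = tnth c i.
Proof.
rewrite /dotp (bigD1 i) //= big1 => [|j ji].
  by rewrite tnth_mktuple eqxx mul1r addr0.
by rewrite tnth_mktuple (negbTE ji) mul0r.
Qed.

Lemma tsub_neq0 x y : x != y -> exists i, tnth (tsub x y) i != 0.
Proof.
move=> xy; apply: contrapT => tsub0; move/eqP: xy; apply.
apply: eq_from_tnth => i; apply/eqP; rewrite -subr_eq0; apply: contrapT => xy_i.
by apply: tsub0; exists i; rewrite tnth_mktuple; exact/negP.
Qed.

End Tuples.

Lemma lipschitz_within_continuous (R : realFieldType) (V W : normedModType R)
    (A : set V) (f : V -> W) (C : R) : 0 <= C ->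
  (forall v w, A v -> A w -> `|f v - f w| <= C * `|v - w|) ->
  {within A, continuous f}.
Proof.
move=> C0 f_lip; apply/subspace_continuousP => x Ax.
apply/cvgrPdist_lt => e e0; apply/nbhs_ballP.
have C1 : 0 < C + 1 by rewrite ltr_wpDl.
exists (e / (C + 1)); first by rewrite /= divr_gt0.
move=> t; rewrite -ball_normE /= => xt At.
apply: le_lt_trans (f_lip _ _ Ax At) _.
apply: (@le_lt_trans _ _ ((C + 1) * `|x - t|)); first by rewrite ler_wpM2r ?lerDl.
by rewrite -ltr_pdivlMl // mulrC.
Qed.

Section RowVectors.
Variables (R : realType) (n : nat).

(* The norm of 'rV[R]_n is the sup norm; it dominates each coordinate. *)
Lemma coord_le_norm (v : 'rV[R]_n) i : `|v ord0 i| <= `|v|.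
Proof.
rewrite [leRHS]/Num.Def.normr /= mx_normrE; apply/bigmax_geP; right => /=.
by exists (ord0, i).
Qed.

(* Tuples, on which the statement is phrased, and row vectors, which carry
   the normed topology, are identified coordinatewise; the l1 distance of
   tuples is then at most n times the distance of rows. *)
Definition row_tuple (v : 'rV[R]_n) : n.-tuple R := [tuple v ord0 i | i < n].
Definition tuple_row (x : n.-tuple R) : 'rV[R]_n := \row_i tnth x i.

Lemma tuple_rowK x : row_tuple (tuple_row x) = x.
Proof. by apply: eq_from_tnth => i; rewrite tnth_mktuple mxE. Qed.

Lemma l1_dist_le (v w : 'rV[R]_n) :
  l1_dist (row_tuple v) (row_tuple w) <= n%:R * `|v - w|.
Proof.
rewrite mulr_natl -[X in _ *+ X]card_ord -sumr_const; apply: ler_sum => i _.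
by rewrite !tnth_mktuple; have := coord_le_norm (v - w) i; rewrite !mxE.
Qed.

Lemma continuous_dotp_row (c : n.-tuple R) :
  continuous (fun v : 'rV[R]_n => dotp (row_tuple v) c).
Proof.
apply/continuous_subspace_setT.
apply: (@lipschitz_within_continuous _ _ _ _ _ (\sum_(i < n) `|tnth c i|)).
  by apply: sumr_ge0 => i _.
move=> v w _ _; rewrite /dotp -sumrB mulr_suml.
apply: le_trans (ler_norm_sum _ _ _) _; apply: ler_sum => i _.
rewrite !tnth_mktuple -mulrBl normrM mulrC ler_wpM2l //.
by have := coord_le_norm (v - w) i; rewrite !mxE.
Qed.

End RowVectors.

Lemma fine_sub_le (R : realType) (a b : \bar R) (c : R) :
  a \is a fin_num -> b \is a fin_num -> (a <= b + c%:E)%E -> fine a - fine b <= c.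
Proof. by move: a b => [a||] [b||] //= _ _; rewrite lerBlDl -lee_fin EFinD. Qed.

Lemma fine_midpoint_lt (R : realType) (a b c d : \bar R) :
  a \is a fin_num -> b \is a fin_num -> c \is a fin_num ->
  (a + b = 2%:E * c + d)%E -> (0 < d)%E -> fine c < (fine a + fine b) / 2.
Proof.
move: a b c d => [a||] [b||] [c||] [d||] //= _ _ _; rewrite lte_fin.
by rewrite -EFinM -!EFinD => -[abcd] d0; lra.
Qed.

Section EtaIntegral.
Variables (R : realType) (n : nat) (gamma : R) (Psi : probability (n.-tuple R) R).
Local Notation S := (simplex R n).
Local Notation eta := (eta_int Psi gamma).
Implicit Types (x y s : n.-tuple R).

Lemma measurable_dotp x : measurable_fun setT (dotp x).
Proof.
apply: measurable_sum => i; apply: measurable_funM; first exact: measurable_cst.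
exact: measurable_tnth.
Qed.

Lemma measurable_simplex : measurable S.
Proof.
have preim (f : n.-tuple R -> R) (B : set R) : measurable_fun setT f ->
    measurable B -> measurable (f @^-1` B).
  by move=> mf mB; rewrite -[_ @^-1` _]setTI; exact: mf.
have -> : S = \bigcap_(i in [set: 'I_n])
      ((fun x : n.-tuple R => tnth x i) @^-1` `[0, 1]%classic)
    `&` ((@tsum R n) @^-1` [set 1]).
  apply/seteqP; split => x /=.
    by move=> [s01 s1]; split => // i _ /=; rewrite in_itv /= s01.
  by move=> [s01 s1]; split => // i; have := s01 i I; rewrite /= in_itv.
apply: measurableI; last first.
  by apply: preim => //; apply: measurable_sum => i; exact: measurable_tnth.
apply: fin_bigcap_measurable => [|i _]; first exact: finite_finset.
by apply: preim; [exact: measurable_tnth | exact: measurable_itv].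
Qed.

Lemma measurable_hyperplane a : measurable [set s | S s /\ dotp a s = 0].
Proof.
rewrite -[X in measurable X]/(S `&` (dotp a @^-1` [set 0])).
apply: measurableI; first exact: measurable_simplex.
by rewrite -[_ @^-1` _]setTI; exact: measurable_dotp.
Qed.

Lemma measurable_powR_dotp x : measurable_fun S (fun s => dotp x s `^ gamma).
Proof.
apply: (measurable_funS measurableT (@subsetT _ S)).
exact: measurableT_comp (measurable_powR gamma) (measurable_dotp x).
Qed.

Lemma measurable_integrand x : measurable_fun S (fun s => (dotp x s `^ gamma)%:E).
Proof. by apply/measurable_EFinP; exact: measurable_powR_dotp. Qed.

Lemma integral_cst_le (c : R) : 0 <= c -> (\int[Psi]_(s in S) c%:E <= c%:E)%E.
Proof.
move=> c0; rewrite integral_cst; last exact: measurable_simplex.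
rewrite -[leRHS]mule1 lee_wpmul2l ?lee_fin //.
exact: probability_le1 _ measurable_simplex.
Qed.

Lemma integralD_nonneg (f g : n.-tuple R -> R) :
  (forall s, S s -> 0 <= f s) -> measurable_fun S f ->
  (forall s, S s -> 0 <= g s) -> measurable_fun S g ->
  (\int[Psi]_(s in S) (f s + g s)%:E =
   \int[Psi]_(s in S) (f s)%:E + \int[Psi]_(s in S) (g s)%:E)%E.
Proof.
move=> f0 mf g0 mg.
have f0' s : S s -> (0 <= (f s)%:E)%E by move=> Ss; rewrite lee_fin f0.
have g0' s : S s -> (0 <= (g s)%:E)%E by move=> Ss; rewrite lee_fin g0.
have mf' : measurable_fun S (fun s => (f s)%:E) by apply/measurable_EFinP.
have mg' : measurable_fun S (fun s => (g s)%:E) by apply/measurable_EFinP.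
rewrite -(ge0_integralD Psi measurable_simplex f0' mf' g0' mg').
by apply: eq_integral => s _; rewrite EFinD.
Qed.

Lemma eta_ge0 x : (0 <= eta x)%E.
Proof. by apply: integral_ge0 => s _; rewrite lee_fin powR_ge0. Qed.

(* For x >= 0 the integrand is bounded by (sum x)^gamma, so eta x is finite. *)
Lemma eta_fin_num x : 0 <= gamma -> nonneg x -> eta x \is a fin_num.
Proof.
move=> g0 x0; rewrite ge0_fin_numE ?eta_ge0 //.
apply: le_lt_trans (ltry (tsum x `^ gamma)).
apply: le_trans (integral_cst_le (powR_ge0 _ _)).
apply: ge0_le_integral => //.
- exact: measurable_simplex.
- by move=> s _; rewrite lee_fin powR_ge0.
- exact: measurable_integrand.
- move=> s Ss; rewrite lee_fin ge0_ler_powR ?nnegrE ?tsum_ge0 ?dotp_le_tsum //.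
  by apply: dotp_ge0 => //; exact: simplex_nonneg.
Qed.

Lemma eta_tscale (t : R) x : 0 <= gamma -> 0 <= t -> nonneg x ->
  fine (eta (tscale t x)) = t `^ gamma * fine (eta x).
Proof.
move=> g0 t0 x0.
suff -> : eta (tscale t x) = ((t `^ gamma)%:E * eta x)%E.
  by rewrite -(fineK (eta_fin_num g0 x0)) -EFinM.
rewrite /eta_int -ge0_integralZl //.
- apply: eq_integral => s; rewrite inE => Ss.
  have s0 := simplex_nonneg Ss.
  by rewrite dotp_tscale powRM ?dotp_ge0 // EFinM.
- exact: measurable_simplex.
- exact: measurable_integrand.
- by move=> s _; rewrite lee_fin powR_ge0.
- by rewrite lee_fin powR_ge0.
Qed.

Lemma powR_dotp_sub_le x y s M : 1 <= gamma -> nonneg x -> nonneg y ->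
  tsum x <= M -> tsum y <= M -> S s ->
  dotp x s `^ gamma <= dotp y s `^ gamma + gamma * M `^ (gamma - 1) * l1_dist x y.
Proof.
move=> g1 x0 y0 xM yM Ss; have s0 := simplex_nonneg Ss.
have g0 : 0 <= gamma := le_trans ler01 g1.
have K0 : 0 <= gamma * M `^ (gamma - 1) by rewrite mulr_ge0 // powR_ge0.
have [yx|xy] := leP (dotp y s) (dotp x s).
  rewrite -lerBlDl; apply: le_trans (powR_sub_le g1 (dotp_ge0 y0 s0) yx _) _.
    exact: le_trans (dotp_le_tsum x0 Ss) xM.
  by rewrite ler_wpM2l // (le_trans (ler_norm _) (dotp_dist_le x y Ss)).
rewrite -[leLHS]addr0 lerD ?(mulr_ge0 K0 (l1_dist_ge0 x y)) //.
by rewrite ge0_ler_powR ?nnegrE ?(ltW xy) ?(dotp_ge0 x0 s0) ?(dotp_ge0 y0 s0).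
Qed.

Lemma eta_sub_le x y M : 1 <= gamma -> nonneg x -> nonneg y ->
  tsum x <= M -> tsum y <= M ->
  fine (eta x) - fine (eta y) <= gamma * M `^ (gamma - 1) * l1_dist x y.
Proof.
move=> g1 x0 y0 xM yM; have g0 : 0 <= gamma := le_trans ler01 g1.
set c := gamma * M `^ (gamma - 1) * l1_dist x y.
have c0 : 0 <= c by rewrite !mulr_ge0 ?powR_ge0 ?l1_dist_ge0.
apply: fine_sub_le (eta_fin_num g0 x0) (eta_fin_num g0 y0) _.
apply: (@le_trans _ _ (\int[Psi]_(s in S) (dotp y s `^ gamma + c)%:E)%E).
  apply: ge0_le_integral.
  - exact: measurable_simplex.
  - by move=> s _; rewrite lee_fin powR_ge0.
  - exact: measurable_integrand.
  - apply/measurable_EFinP; apply: measurable_funD; last exact: measurable_cst.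
    exact: measurable_powR_dotp.
  - by move=> s Ss; rewrite lee_fin powR_dotp_sub_le.
rewrite integralD_nonneg.
- by rewrite leeD2l // integral_cst_le.
- by move=> s _; exact: powR_ge0.
- exact: measurable_powR_dotp.
- by move=> s _.
- exact: measurable_cst.
Qed.

Lemma eta_lipschitz x y M : 1 <= gamma -> nonneg x -> nonneg y ->
  tsum x <= M -> tsum y <= M ->
  `|fine (eta x) - fine (eta y)| <= gamma * M `^ (gamma - 1) * l1_dist x y.
Proof.
move=> g1 x0 y0 xM yM; rewrite ler_norml (eta_sub_le g1 x0 y0 xM yM) andbT.
by rewrite lerNl opprB l1_distC (eta_sub_le g1 y0 x0 yM xM).
Qed.

Lemma integral_gt0_off_hyperplane (f : n.-tuple R -> R) a :
  Psi S = 1%E -> Psi [set s | S s /\ dotp a s = 0] = 0%E ->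
  measurable_fun S f -> (forall s, S s -> 0 <= f s) ->
  (forall s, S s -> dotp a s != 0 -> 0 < f s) ->
  (0 < \int[Psi]_(s in S) (f s)%:E)%E.
Proof.
move=> PS Pa mf f0 f_pos; set H := [set s | S s /\ dotp a s = 0].
have mF : measurable_fun S (fun s => (f s)%:E) by apply/measurable_EFinP.
rewrite lt0e integral_ge0 ?andbT; last by move=> s Ss; rewrite lee_fin f0.
apply/negP => /eqP int0.
have abs0 : (\int[Psi]_(s in S) `|(f s)%:E| = 0)%E.
  rewrite -[RHS]int0; apply: eq_integral => s; rewrite inE => Ss.
  by rewrite gee0_abs // lee_fin f0.
have [N [mN PN0 fN]] := (ae_eq_integral_abs Psi measurable_simplex mF).1 abs0.
have cover : S `<=` N `|` H.
  move=> s Ss; have [a0|a_neq0] := eqVneq (dotp a s) 0; first by right.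
  by left; apply: fN => /(_ Ss) /eqP; rewrite eqe gt_eqF // f_pos.
have : (Psi S <= Psi N + Psi H)%E.
  apply: le_trans (measureU2 Psi mN (measurable_hyperplane a)).
  apply: le_measure cover; rewrite inE; first exact: measurable_simplex.
  exact: measurableU mN (measurable_hyperplane a).
by rewrite PS PN0 Pa adde0 lee_fin ler10.
Qed.

(* Strict midpoint convexity of eta on the nonnegative orthant: the convexity
   gap of the integrand is nonnegative, and positive off the hyperplane
   (x - y)^T s = 0, which Psi does not charge. *)
Lemma eta_midpoint_lt x y : 1 < gamma -> Psi S = 1%E ->
  (forall a, (exists i, tnth a i != 0) -> Psi [set s | S s /\ dotp a s = 0] = 0%E) ->
  nonneg x -> nonneg y -> x != y ->
  fine (eta (tmid x y)) < (fine (eta x) + fine (eta y)) / 2.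
Proof.
move=> g1 PS P_hyp x0 y0 xy; have g0 : 0 <= gamma := le_trans ler01 (ltW g1).
set m := tmid x y; have m0 : nonneg m := nonneg_tmid x0 y0.
pose gap s := dotp x s `^ gamma + dotp y s `^ gamma - 2 * dotp m s `^ gamma.
have gap_ge0 s : S s -> 0 <= gap s.
  move=> Ss; have s0 := simplex_nonneg Ss.
  have := powR_midpoint_le g1 (dotp_ge0 x0 s0) (dotp_ge0 y0 s0).
  by rewrite /gap /m dotp_tmid; lra.
have gap_gt0 s : S s -> dotp (tsub x y) s != 0 -> 0 < gap s.
  move=> Ss; have s0 := simplex_nonneg Ss; rewrite dotp_tsub subr_eq0 => xys.
  have := powR_midpoint_lt g1 (dotp_ge0 x0 s0) (dotp_ge0 y0 s0) xys.
  by rewrite /gap /m dotp_tmid; lra.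
have gap_meas : measurable_fun S gap.
  apply: measurable_funB.
    by apply: measurable_funD; exact: measurable_powR_dotp.
  by apply: measurable_funM; [exact: measurable_cst | exact: measurable_powR_dotp].
have [i xy_i] := tsub_neq0 xy.
have gap_pos := integral_gt0_off_hyperplane PS (P_hyp _ (ex_intro _ i xy_i))
  gap_meas gap_ge0 gap_gt0.
have decomp : (eta x + eta y = 2%:E * eta m + \int[Psi]_(s in S) (gap s)%:E)%E.
  have pow_ge0 z s : S s -> 0 <= dotp z s `^ gamma by move=> _; exact: powR_ge0.
  have pow_meas := measurable_powR_dotp.
  rewrite /eta_int.
  rewrite -(integralD_nonneg (pow_ge0 x) (pow_meas x) (pow_ge0 y) (pow_meas y)).
  have twice_ge0 s : S s -> 0 <= 2 * dotp m s `^ gamma.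
    by move=> Ss; rewrite mulr_ge0 ?pow_ge0.
  have twice_meas : measurable_fun S (fun s => 2 * dotp m s `^ gamma).
    by apply: measurable_funM; [exact: measurable_cst | exact: pow_meas].
  rewrite (eq_integral (fun s => (2 * dotp m s `^ gamma + gap s)%:E)); last first.
    by move=> s _; rewrite /gap; congr (_%:E); lra.
  rewrite (integralD_nonneg twice_ge0 twice_meas gap_ge0 gap_meas); congr (_ + _)%E.
  under eq_integral do rewrite EFinM.
  apply: ge0_integralZl; first exact: measurable_simplex.
  - exact: measurable_integrand.
  - by move=> s Ss; rewrite lee_fin pow_ge0.
  - by rewrite lee_fin.
have fin := eta_fin_num g0.
exact: fine_midpoint_lt (fin _ x0) (fin _ y0) (fin _ m0) decomp gap_pos.
Qed.

End EtaIntegral.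

Section Minimization.
Variables (R : realType) (n : nat) (gamma : R) (Psi : probability (n.-tuple R) R).
Hypotheses (gamma_gt1 : 1 < gamma) (psi_simplex : Psi (simplex R n) = 1%E)
  (psi_hyperplane : forall a : n.-tuple R, (exists i, tnth a i != 0) ->
     Psi [set s | simplex R n s /\ dotp a s = 0] = 0%E)
  (eta_basis_gt0 : forall i : 'I_n, (0 < eta_int Psi gamma (basis_vec R i))%E).
Local Notation S := (simplex R n).
Local Notation eta := (eta_int Psi gamma).
Local Notation f := (fobj Psi gamma).
Implicit Types (x y z w : n.-tuple R).

Let gamma_ge0 : 0 <= gamma. Proof. exact: le_trans ler01 (ltW gamma_gt1). Qed.

(* The denominator of f is (w^T c)^gamma for the weights c_i = eta(e_i)^(1/gamma). *)
Definition weights : n.-tuple R :=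
  [tuple fine (eta (basis_vec R i)) `^ gamma^-1 | i < n].

Lemma weights_gt0 i : 0 < tnth weights i.
Proof.
rewrite tnth_mktuple; apply/powR_gt0/fine_gt0; rewrite eta_basis_gt0 ltey_eq.
by rewrite eta_fin_num //; exact: nonneg_basis_vec.
Qed.

Lemma weights_nonneg : nonneg weights.
Proof. by move=> i; exact/ltW/weights_gt0. Qed.

Lemma fobjE w : f w = fine (eta w) / dotp w weights `^ gamma.
Proof.
rewrite /fobj; congr (_ / _ `^ _).
by apply: eq_bigr => i _; rewrite tnth_mktuple.
Qed.

Lemma fobj_tscale (t : R) w : 0 < t -> nonneg w -> f (tscale t w) = f w.
Proof.
move=> t0 w0; have wc0 := dotp_ge0 w0 weights_nonneg.
rewrite [f (tscale t w)]fobjE (eta_tscale Psi gamma_ge0 (ltW t0) w0) fobjE.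
rewrite dotp_tscale powRM ?(ltW t0) // -mulf_div divff ?mul1r //.
by rewrite gt_eqF // powR_gt0.
Qed.

(* Since f is scale invariant, minimizing f over the simplex amounts to
   minimizing eta over the slice {x >= 0 | x^T c = 1} of the orthant; the two
   sets correspond through the normalizations below. *)
Definition slice x := nonneg x /\ dotp x weights = 1.
Definition to_slice w : n.-tuple R := tscale (dotp w weights)^-1 w.
Definition to_simplex x : n.-tuple R := tscale (tsum x)^-1 x.

Lemma dotp_weights_gt0 w : S w -> 0 < dotp w weights.
Proof.
move=> Sw; have w0 := simplex_nonneg Sw.
have wc_ge0 i : 0 <= tnth w i * tnth weights i := mulr_ge0 (w0 i) (weights_nonneg i).
rewrite lt_neqAle eq_sym dotp_ge0 ?andbT //; last exact: weights_nonneg.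
apply/eqP => wc0; have w_eq0 i : tnth w i = 0.
  have /eqP := psumr_eq0P (fun i _ => wc_ge0 i) wc0 (i := i) isT.
  by rewrite mulf_eq0 (gt_eqF (weights_gt0 i)) orbF => /eqP.
case: Sw => _; rewrite big1 => [/esym/eqP|i _]; first by rewrite oner_eq0.
exact: w_eq0.
Qed.

Lemma tsum_slice_gt0 x : slice x -> 0 < tsum x.
Proof.
move=> [x0 xc]; rewrite lt_neqAle eq_sym tsum_ge0 // andbT.
apply/eqP => x_sum0; have x_eq0 i : tnth x i = 0 by exact: psumr_eq0P x_sum0 _ isT.
move: xc; rewrite /dotp big1 => [/esym/eqP|i _]; first by rewrite oner_eq0.
by rewrite x_eq0 mul0r.
Qed.

Lemma to_slice_slice w : S w -> slice (to_slice w).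
Proof.
move=> Sw; have wc0 := dotp_weights_gt0 Sw; split.
  by apply: nonneg_tscale; [rewrite invr_ge0 ltW | exact: simplex_nonneg].
by rewrite dotp_tscale mulVf // gt_eqF.
Qed.

Lemma to_simplex_simplex x : slice x -> S (to_simplex x).
Proof.
move=> xK; have sx0 := tsum_slice_gt0 xK; have x0 := xK.1; split.
  move=> i; rewrite tnth_mktuple mulr_ge0 ?invr_ge0 ?(ltW sx0) //=.
  by rewrite mulrC ler_pdivrMr // mul1r coord_le_tsum.
by rewrite -/(tsum _) tsum_tscale mulVf // gt_eqF.
Qed.

Lemma to_simplexK w : S w -> to_simplex (to_slice w) = w.
Proof.
move=> Sw; have wc0 := dotp_weights_gt0 Sw; have sw1 : tsum w = 1 := Sw.2.
by rewrite /to_simplex tsum_tscale sw1 mulr1 invrK tscaleK // gt_eqF.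
Qed.

Lemma fobj_slice x : slice x -> f x = fine (eta x).
Proof. by move=> [_ xc]; rewrite fobjE xc powR1 divr1. Qed.

Lemma fobj_to_slice w : S w -> f w = fine (eta (to_slice w)).
Proof.
move=> Sw; have wc0 := dotp_weights_gt0 Sw.
rewrite -fobj_slice; last exact: to_slice_slice.
by apply/esym/fobj_tscale; [rewrite invr_gt0 | exact: simplex_nonneg].
Qed.

Lemma fobj_to_simplex x : slice x -> f (to_simplex x) = fine (eta x).
Proof.
move=> xK; rewrite -fobj_slice //; apply: fobj_tscale; last exact: xK.1.
by rewrite invr_gt0 tsum_slice_gt0.
Qed.

Lemma slice_tmid x y : slice x -> slice y -> slice (tmid x y).
Proof.
move=> [x0 xc] [y0 yc]; split; first exact: nonneg_tmid.
by rewrite dotp_tmid xc yc; lra.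
Qed.

(* Minimizers of eta on the slice are unique: the midpoint of two distinct
   ones would lie in the slice with a strictly smaller value. *)
Lemma slice_min_unique x y : slice x -> slice y ->
  (forall z, slice z -> fine (eta x) <= fine (eta z)) ->
  fine (eta y) <= fine (eta x) -> y = x.
Proof.
move=> xK yK x_min yx; apply/eqP; apply: contraT => y_neq_x.
have mid_lt :=
  eta_midpoint_lt gamma_gt1 psi_simplex psi_hyperplane yK.1 xK.1 y_neq_x.
have mid_le : (fine (eta y) + fine (eta x)) / 2 <= fine (eta x).
  by rewrite ler_pdivrMr // mulr_natr mulr2n lerD2r.
have := lt_le_trans (le_lt_trans (x_min _ (slice_tmid yK xK)) mid_lt) mid_le.
by rewrite ltxx.
Qed.

(* Existence: the slice is compact (it lies in the box prod_i [0, 1/c_i]) and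
   eta is continuous on it, being Lipschitz there. *)
Lemma slice_coord_le x i : slice x -> tnth x i <= (tnth weights i)^-1.
Proof.
move=> [x0 xc]; rewrite -(ler_pM2r (weights_gt0 i)) mulVf ?gt_eqF ?weights_gt0 //.
rewrite -xc /dotp (bigD1 i) //= lerDl sumr_ge0 // => j _.
exact: mulr_ge0 (x0 j) (weights_nonneg j).
Qed.

Definition slice_bound : R := \sum_(i < n) (tnth weights i)^-1.

Lemma slice_tsum_le x : slice x -> tsum x <= slice_bound.
Proof. by move=> xK; apply: ler_sum => i _; exact: slice_coord_le. Qed.

(* Psi is a probability on the simplex, so the simplex, hence 'I_n, is nonempty. *)
Lemma dim_gt0 : (0 < n)%N.
Proof.
rewrite lt0n; apply/negP => /eqP n0.
have S0 : S = set0.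
  apply/seteqP; split => // s [_]; rewrite big1 => [/esym/eqP|i _].
    by rewrite oner_eq0.
  by have := ltn_ord i; rewrite {2}n0.
by move: psi_simplex; rewrite S0 measure0 => /esym/eqP; rewrite onee_eq0.
Qed.

Definition slice_rows : set 'rV[R]_n := [set v | slice (row_tuple v)].

Lemma slice_rows_nonempty : slice_rows !=set0.
Proof.
pose i0 := Ordinal dim_gt0; have c0 := weights_gt0 i0.
exists (tuple_row (tscale (tnth weights i0)^-1 (basis_vec R i0))).
rewrite /slice_rows /= tuple_rowK; split.
  by apply: nonneg_tscale; [rewrite invr_ge0 ltW | exact: nonneg_basis_vec].
by rewrite dotp_tscale dotp_basis_vec mulVf // gt_eqF.
Qed.

Lemma slice_rows_compact : compact slice_rows.
Proof.
pose box := [set v : 'rV[R]_n |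
  forall i, `[0, (tnth weights i)^-1]%classic (v ord0 i)].
have box_compact : compact box.
  apply: (@rV_compact _ _ (fun i => `[0, (tnth weights i)^-1]%classic)) => i.
  exact: segment_compact.
apply: (subclosed_compact _ box_compact); last first.
  move=> v [v0 vc] i; rewrite /= in_itv /=.
  have := slice_coord_le i (conj v0 vc); rewrite tnth_mktuple => ->.
  by have := v0 i; rewrite tnth_mktuple => ->.
have -> : slice_rows = \bigcap_(i in setT) [set v : 'rV[R]_n | 0 <= v ord0 i]
    `&` ((fun v => dotp (row_tuple v) weights) @^-1` [set 1]).
  apply/seteqP; split => v /=.
    by move=> [v0 vc]; split => // i _ /=; have := v0 i; rewrite tnth_mktuple.
  by move=> [v0 vc]; split => // i; rewrite tnth_mktuple; exact: v0.
apply: closedI.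
  apply: closed_bigI => i _.
  apply: (@preimage_closed _ _ (fun v : 'rV[R]_n => v ord0 i) [set t | 0 <= t]).
    by move=> v _; exact: coord_continuous.
  exact: closed_ge.
apply: preimage_closed; last exact: closed_eq.
by move=> v _; exact: continuous_dotp_row.
Qed.

Lemma eta_rows_continuous :
  {within slice_rows, continuous (fun v => fine (eta (row_tuple v)))}.
Proof.
pose K := gamma * slice_bound `^ (gamma - 1).
apply: (@lipschitz_within_continuous _ _ _ _ _ (K * n%:R)).
  by rewrite mulr_ge0 // mulr_ge0 // powR_ge0.
move=> v w vK wK; rewrite -mulrA.
have lip := eta_lipschitz Psi (ltW gamma_gt1) vK.1 wK.1
  (slice_tsum_le vK) (slice_tsum_le wK).
by apply: le_trans lip _; rewrite ler_wpM2l ?mulr_ge0 ?powR_ge0 ?l1_dist_le.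
Qed.

Lemma slice_min_exists :
  exists2 x, slice x & forall z, slice z -> fine (eta x) <= fine (eta z).
Proof.
have [v vK v_min] := compact_EVT_min slice_rows_nonempty slice_rows_compact
  eta_rows_continuous.
exists (row_tuple v); first by move: vK; rewrite inE.
move=> z zK; have := v_min (tuple_row z); rewrite tuple_rowK; apply.
by rewrite inE /slice_rows /= tuple_rowK.
Qed.

End Minimization.

Theorem mainTheorem12 (R : realType) (n : nat) (gamma : R)
  (Psi : probability (n.-tuple R) R) :
  1 < gamma ->
  Psi (simplex R n) = 1%E ->
  (forall a : n.-tuple R, (exists i, tnth a i != 0) ->
     Psi [set s | simplex R n s /\ dotp a s = 0] = 0%E) ->
  (forall i : 'I_n, (0 < eta_int Psi gamma (basis_vec R i))%E) ->
  exists w : n.-tuple R,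
    [/\ simplex R n w,
        (forall v, simplex R n v -> fobj Psi gamma w <= fobj Psi gamma v)
      & (forall w', simplex R n w' ->
           (forall v, simplex R n v -> fobj Psi gamma w' <= fobj Psi gamma v) ->
           w' = w)].
Proof.
move=> g1 PS P_hyp e_pos.
have [x xK x_min] := slice_min_exists g1 PS e_pos.
have f_simplex := fobj_to_simplex g1 e_pos.
have f_slice := fobj_to_slice g1 e_pos.
exists (to_simplex x); split.
- exact: to_simplex_simplex xK.
- move=> v Sv; rewrite (f_simplex _ xK) (f_slice _ Sv).
  exact: x_min (to_slice_slice g1 e_pos Sv).
- move=> w Sw w_min; rewrite -(to_simplexK g1 e_pos Sw); congr to_simplex.
  apply: (slice_min_unique g1 PS P_hyp xK (to_slice_slice g1 e_pos Sw) x_min).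
  have := w_min _ (to_simplex_simplex xK).
  by rewrite (f_simplex _ xK) (f_slice _ Sw).
Qed.
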